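(* Let $\sigma(x,y)=(x\rightharpoonup y,x\leftharpoonup y)$ be an involutive non-degenerate quiver-theoretic Yang--Baxter map on a quiver $\mathscr{A}$ over $\Lambda$, and let $\mathscr{C}=\mathscr{C}(\sigma)$ be its structure category. Then $\mathscr{C}$ is left-Ore and any two elements of $\mathscr{C}$ with the same target admit a left-lcm. Consequently the canonical functor $\mathscr{C}\to\mathrm{Env}(\mathscr{C})$ is injective, and every element of $\mathscr{C}\mathscr{C}^{-1}\subseteq\mathrm{Env}(\mathscr{C})$ admits a symmetric normal decomposition (in the sense of Dehornoy et al., Foundations of Garside theory, Ch. III) with respect to the Garside structure of $\mathscr{C}$.
   Context: A quiver over $\Lambda$ has source/target maps $\mathfrak{s},\mathfrak{t}$; $\mathscr{A}\otimes\mathscr{A}$ is the quiver of composable pairs $x|y$ ($\mathfrak{t}(x)=\mathfrak{s}(y)$). A quiver-theoretic Yang--Baxter map is a source/target-preserving map $\sigma\colon\mathscr{A}\otimes\mathscr{A}\to\mathscr{A}\otimes\mathscr{A}$ satisfying the braid relation $(\sigma\otimes\mathrm{id})(\mathrm{id}\otimes\sigma)(\sigma\otimes\mathrm{id})=(\mathrm{id}\otimes\sigma)(\sigma\otimes\mathrm{id})(\mathrm{id}\otimes\sigma)$; involutive means $\sigma^2=\mathrm{id}$; non-degenerate means all maps $x\rightharpoonup\cdot\colon\mathscr{A}(\mathfrak{t}(x),\Lambda)\to\mathscr{A}(\mathfrak{s}(x),\Lambda)$ and $\cdot\leftharpoonup y\colon\mathscr{A}(\Lambda,\mathfrak{s}(y))\to\mathscr{A}(\Lambda,\mathfrak{t}(y))$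 are bijective. $\mathscr{C}(\sigma)$ is the category presented by generators $\mathscr{A}$ and relations $x|y\sim(x\rightharpoonup y)|(x\leftharpoonup y)$. A category is left-Ore if it is (left- and right-) cancellative and any two elements with the same target have a common left-multiple $ux=vy$. A left-lcm of $x,y$ is a common left-multiple right-dividing every common left-multiple. $\mathrm{Env}(\mathscr{C})$ is the enveloping groupoid: the groupoid with a functor $\iota\colon\mathscr{C}\to\mathrm{Env}(\mathscr{C})$ through which every functor from $\mathscr{C}$ to a groupoid factors uniquely. *)

(* Composition is written in DIAGRAMMATIC order throughout, as in the paper:
   x|y composable means t(x) = s(y), and "f g" means f followed by g. *)
From Stdlib Require Import List Relations.
Import ListNotations.

Record quiver := Quiver {
  qobj : Type;
  qarr : Type;
  qsrc : qarr -> qobj;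
  qtgt : qarr -> qobj
}.
Arguments qsrc {q} _.
Arguments qtgt {q} _.

Definition composable {Q : quiver} (x y : qarr Q) : Prop := qtgt x = qsrc y.

(* A map sigma : A (x) A -> A (x) A is given by its two components
   sigma(x,y) = (lact x y, ract x y) = (x -> y, x <- y); only their values on
   composable pairs matter. *)
Section YB.
Variables (Q : quiver) (lact ract : qarr Q -> qarr Q -> qarr Q).

(* sigma maps composable pairs to composable pairs and preserves source and
   target of the quiver A (x) A (source of x|y is s(x), target is t(y)). *)
Definition st_preserving : Prop :=
  forall x y : qarr Q, composable x y ->
    qsrc (lact x y) = qsrc x /\
    composable (lact x y) (ract x y) /\
    qtgt (ract x y) = qtgt y.

(* (sigma (x) id)(id (x) sigma)(sigma (x) id) = (id (x) sigma)(sigma (x) id)(id (x) sigma)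
   on composable triples x|y|z. *)
Definition braid_relation : Prop :=
  forall x y z : qarr Q, composable x y -> composable y z ->
    let a := lact x y in let b := ract x y in
    let c := lact y z in let d := ract y z in
    (lact a (lact b z), ract a (lact b z), ract b z)
    = (lact x c, lact (ract x c) d, ract (ract x c) d).

Definition involutive : Prop :=
  forall x y : qarr Q, composable x y ->
    lact (lact x y) (ract x y) = x /\ ract (lact x y) (ract x y) = y.

Definition nondegenerate : Prop :=
  (forall x : qarr Q,
     (forall y1 y2, qsrc y1 = qtgt x -> qsrc y2 = qtgt x ->
        lact x y1 = lact x y2 -> y1 = y2) /\
     (forall z, qsrc z = qsrc x -> exists y, qsrc y = qtgt x /\ lact x y = z)) /\
  (forall y : qarr Q,
     (forall x1 x2, qtgt x1 = qsrc y -> qtgt x2 = qsrc y ->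
        ract x1 y = ract x2 y -> x1 = x2) /\
     (forall z, qtgt z = qtgt y -> exists x, qtgt x = qsrc y /\ ract x y = z)).

Definition involutive_nondegenerate_YB_map : Prop :=
  st_preserving /\ braid_relation /\ involutive /\ nondegenerate.

(* The structure category C(sigma): morphisms are paths of the quiver
   (words with explicit endpoints) modulo the congruence generated by
   x|y ~ (x -> y)|(x <- y).                                             *)
Record word := W { wsrc : qobj Q; warr : list (qarr Q); wtgt : qobj Q }.

Fixpoint is_path (a : qobj Q) (l : list (qarr Q)) (b : qobj Q) : Prop :=
  match l with
  | [] => a = b
  | x :: l' => qsrc x = a /\ is_path (qtgt x) l' b
  end.

Definition valid (w : word) : Prop := is_path (wsrc w) (warr w) (wtgt w).

Definition idw (a : qobj Q) : word := W a [] a.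

(* composition, f then g (meaningful when wtgt f = wsrc g) *)
Definition cat (f g : word) : word := W (wsrc f) (warr f ++ warr g) (wtgt g).

Inductive rel_step : word -> word -> Prop :=
  | rel_step_intro : forall (a b : qobj Q) (p q : list (qarr Q)) (x y : qarr Q),
      composable x y ->
      rel_step (W a (p ++ x :: y :: q) b) (W a (p ++ lact x y :: ract x y :: q) b).

Definition eqC : word -> word -> Prop := clos_refl_sym_trans word rel_step.

Definition left_mult (h f : word) : Prop :=
  exists u, valid u /\ wtgt u = wsrc f /\ eqC (cat u f) h.

Definition left_div (f h : word) : Prop :=
  exists g, valid g /\ wtgt f = wsrc g /\ eqC (cat f g) h.

Definition left_cancellative : Prop :=
  forall f g g', valid f -> valid g -> valid g' ->
    wtgt f = wsrc g -> wtgt f = wsrc g' ->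
    eqC (cat f g) (cat f g') -> eqC g g'.

Definition right_cancellative : Prop :=
  forall f g g', valid f -> valid g -> valid g' ->
    wtgt g = wsrc f -> wtgt g' = wsrc f ->
    eqC (cat g f) (cat g' f) -> eqC g g'.

Definition left_Ore : Prop :=
  left_cancellative /\ right_cancellative /\
  (forall f g, valid f -> valid g -> wtgt f = wtgt g ->
     exists u v, valid u /\ valid v /\ wtgt u = wsrc f /\ wtgt v = wsrc g /\
       eqC (cat u f) (cat v g)).

Definition left_lcm (h f g : word) : Prop :=
  valid h /\ left_mult h f /\ left_mult h g /\
  (forall h', valid h' -> left_mult h' f -> left_mult h' g -> left_mult h' h).

Definition invertible (f : word) : Prop :=
  valid f /\ exists g, valid g /\ wtgt f = wsrc g /\ wtgt g = wsrc f /\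
    eqC (cat f g) (idw (wsrc f)) /\ eqC (cat g f) (idw (wsrc g)).

Definition subfamily (S : word -> Prop) : Prop :=
  (forall w, S w -> valid w) /\ (forall w w', S w -> eqC w w' -> S w').

Definition S_sharp (S : word -> Prop) (f : word) : Prop :=
  valid f /\
  ((exists s e, S s /\ invertible e /\ wtgt s = wsrc e /\ eqC (cat s e) f)
   \/ invertible f).

Definition S_greedy (S : word -> Prop) (g1 g2 : word) : Prop :=
  forall s f, S s -> valid f -> wtgt f = wsrc g1 ->
    left_div s (cat f (cat g1 g2)) -> left_div s (cat f g1).

Fixpoint C_path (a : qobj Q) (ls : list word) (b : qobj Q) : Prop :=
  match ls with
  | [] => a = b
  | g :: ls' => valid g /\ wsrc g = a /\ C_path (wtgt g) ls' b
  end.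

Fixpoint eval_path (a : qobj Q) (ls : list word) : word :=
  match ls with
  | [] => idw a
  | g :: ls' => cat g (eval_path (wtgt g) ls')
  end.

Fixpoint all_greedy (S : word -> Prop) (ls : list word) : Prop :=
  match ls with
  | g1 :: ((g2 :: _) as ls') => S_greedy S g1 g2 /\ all_greedy S ls'
  | _ => True
  end.

Definition S_normal (S : word -> Prop) (ls : list word) : Prop :=
  Forall (S_sharp S) ls /\ all_greedy S ls.

Definition garside_family (S : word -> Prop) : Prop :=
  forall g, valid g ->
    exists ls, C_path (wsrc g) ls (wtgt g) /\ S_normal S ls /\
      eqC (eval_path (wsrc g) ls) g.

Definition left_disjoint (f g : word) : Prop :=
  wsrc f = wsrc g /\
  forall h h', valid h -> valid h' -> wtgt h = wsrc f ->
    left_div h' (cat h f) -> left_div h' (cat h g) -> left_div h' h.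

Definition first_entry (x : qobj Q) (ls : list word) : word :=
  match ls with [] => idw x | g :: _ => g end.

(* the negative-positive path  t_q^-1|...|t_1^-1|s_1|...|s_p  (ts = [t_1;...;t_q],
   ss = [s_1;...;s_p], both starting at x) is symmetric S-normal *)
Definition sym_S_normal (S : word -> Prop) (x : qobj Q) (ts ss : list word) : Prop :=
  S_normal S ts /\ S_normal S ss /\
  left_disjoint (first_entry x ts) (first_entry x ss).

End YB.

Record groupoid := Groupoid {
  gobj : Type;
  gmor : Type;
  gdom : gmor -> gobj;
  gcod : gmor -> gobj;
  gid : gobj -> gmor;
  gcomp : gmor -> gmor -> gmor;        (* gcomp f g = f followed by g *)
  ginv : gmor -> gmor;
  gid_dom : forall a, gdom (gid a) = a;
  gid_cod : forall a, gcod (gid a) = a;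
  gcomp_dom : forall f g, gcod f = gdom g -> gdom (gcomp f g) = gdom f;
  gcomp_cod : forall f g, gcod f = gdom g -> gcod (gcomp f g) = gcod g;
  gid_l : forall f, gcomp (gid (gdom f)) f = f;
  gid_r : forall f, gcomp f (gid (gcod f)) = f;
  gassoc : forall f g h, gcod f = gdom g -> gcod g = gdom h ->
             gcomp (gcomp f g) h = gcomp f (gcomp g h);
  ginv_dom : forall f, gdom (ginv f) = gcod f;
  ginv_cod : forall f, gcod (ginv f) = gdom f;
  ginv_r : forall f, gcomp f (ginv f) = gid (gdom f);
  ginv_l : forall f, gcomp (ginv f) f = gid (gcod f)
}.

Record gfun (G H : groupoid) := GFun {
  gf0 : gobj G -> gobj H;
  gf1 : gmor G -> gmor H
}.
Arguments gf0 {G H} _ _.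
Arguments gf1 {G H} _ _.

Definition is_gfunctor {G H : groupoid} (P : gfun G H) : Prop :=
  (forall m, gdom H (gf1 P m) = gf0 P (gdom G m)) /\
  (forall m, gcod H (gf1 P m) = gf0 P (gcod G m)) /\
  (forall a, gf1 P (gid G a) = gid H (gf0 P a)) /\
  (forall f g, gcod G f = gdom G g ->
     gf1 P (gcomp G f g) = gcomp H (gf1 P f) (gf1 P g)).

(* functors from the structure category C(sigma) to a groupoid,
   given on representatives *)
Record cfun (Q : quiver) (G : groupoid) := CFun {
  cf0 : qobj Q -> gobj G;
  cf1 : word Q -> gmor G
}.
Arguments cf0 {Q G} _ _.
Arguments cf1 {Q G} _ _.

Definition is_cfunctor (Q : quiver) (lact ract : qarr Q -> qarr Q -> qarr Q)
    {G : groupoid} (F : cfun Q G) : Prop :=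
  (forall w, valid Q w -> gdom G (cf1 F w) = cf0 F (wsrc Q w)) /\
  (forall w, valid Q w -> gcod G (cf1 F w) = cf0 F (wtgt Q w)) /\
  (forall w w', valid Q w -> valid Q w' -> eqC Q lact ract w w' ->
     cf1 F w = cf1 F w') /\
  (forall a, cf1 F (idw Q a) = gid G (cf0 F a)) /\
  (forall f g, valid Q f -> valid Q g -> wtgt Q f = wsrc Q g ->
     cf1 F (cat Q f g) = gcomp G (cf1 F f) (cf1 F g)).

Definition is_enveloping (Q : quiver) (lact ract : qarr Q -> qarr Q -> qarr Q)
    (G : groupoid) (iota : cfun Q G) : Prop :=
  is_cfunctor Q lact ract iota /\
  forall (H : groupoid) (F : cfun Q H), is_cfunctor Q lact ract F ->
    (exists P : gfun G H, is_gfunctor P /\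
       (forall a, gf0 P (cf0 iota a) = cf0 F a) /\
       (forall w, valid Q w -> gf1 P (cf1 iota w) = cf1 F w)) /\
    (forall P P' : gfun G H, is_gfunctor P -> is_gfunctor P' ->
       (forall a, gf0 P (cf0 iota a) = cf0 F a) ->
       (forall w, valid Q w -> gf1 P (cf1 iota w) = cf1 F w) ->
       (forall a, gf0 P' (cf0 iota a) = cf0 F a) ->
       (forall w, valid Q w -> gf1 P' (cf1 iota w) = cf1 F w) ->
       (forall a, gf0 P a = gf0 P' a) /\ (forall m, gf1 P m = gf1 P' m)).

Definition injective_cfun (Q : quiver) (lact ract : qarr Q -> qarr Q -> qarr Q)
    {G : groupoid} (iota : cfun Q G) : Prop :=
  forall f g, valid Q f -> valid Q g -> cf1 iota f = cf1 iota g ->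
    eqC Q lact ract f g.

(* Write an element x1 ... xn of C(σ) through its atoms x1, x1 ⇀ x2, x1 ⇀ (x2 ⇀ x3), ....
   By involutivity and the braid relation this multiset is invariant under the defining
   relations, and by non-degeneracy each of its members can be moved to the front of the word.
   Hence an element is determined by its source and its multiset of atoms, and
   left-divisibility is multiset inclusion: C(σ) is left-cancellative, with right-lcms given
   by multiset unions. The opposite solution yields right-cancellation and left-lcms, hence
   the Ore condition.
   The multiplicities of the atoms of an element are the image of 0 under an affine action
   of C(σ) on ℤ-valued functions on arrows. This action is a faithful functor into a groupoid,
   and it factors through Env(C), so ι is injective.
   Finally, if u f = v g is a left-lcm of f and g, then f g⁻¹ = u⁻¹ v with u and v
   left-disjoint, and S-normal decompositions of u and v form a symmetric one of f g⁻¹. *)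

From Stdlib Require Import List Relations Permutation Setoid Morphisms ZArith Lia
  Classical ClassicalEpsilon ProofIrrelevance FunctionalExtensionality PropExtensionality.
Import ListNotations.

Definition multiplicity {A : Type} (l : list A) (z : A) : nat :=
  count_occ (fun x y : A => excluded_middle_informative (x = y)) l z.

Definition submultiset {A : Type} (l1 l2 : list A) : Prop :=
  forall z, multiplicity l1 z <= multiplicity l2 z.

Section Multisets.
Context {A : Type}.
Implicit Types (l : list A) (x z : A).

Lemma multiplicity_cons x l z :
  multiplicity (x :: l) z =
  (if excluded_middle_informative (x = z) then 1 else 0) + multiplicity l z.
Proof. unfold multiplicity; simpl; destruct excluded_middle_informative; auto. Qed.

Lemma multiplicity_app l1 l2 z : multiplicity (l1 ++ l2) z = multiplicity l1 z + multiplicity l2 z.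
Proof. apply count_occ_app. Qed.

Lemma In_multiplicity l z : In z l <-> 0 < multiplicity l z.
Proof. apply count_occ_In. Qed.

Lemma multiplicity_not_In l z : ~ In z l -> multiplicity l z = 0.
Proof. apply count_occ_not_In. Qed.

Lemma Permutation_multiplicity l1 l2 :
  Permutation l1 l2 <-> forall z, multiplicity l1 z = multiplicity l2 z.
Proof. apply Permutation_count_occ. Qed.

Lemma multiplicity_max l1 l2 :
  exists l, forall z, multiplicity l z = Nat.max (multiplicity l1 z) (multiplicity l2 z).
Proof.
  assert (Hdiff : exists d, forall z, multiplicity d z = multiplicity l2 z - multiplicity l1 z).
  { induction l2 as [|y l2 [d Hd]].
    - exists []; auto.
    - destruct (Compare_dec.le_lt_dec (multiplicity l1 y) (multiplicity l2 y)).
      + exists (y :: d). intros z. rewrite !multiplicity_cons, Hd.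
        destruct excluded_middle_informative; subst; lia.
      + exists d. intros z. rewrite multiplicity_cons, Hd.
        destruct excluded_middle_informative; subst; lia. }
  destruct Hdiff as [d Hd]. exists (l1 ++ d). intros z. rewrite multiplicity_app, Hd. lia.
Qed.

End Multisets.

Section MultisetsMap.
Context {A B : Type} (f : A -> B) (P : A -> Prop).
Hypothesis f_inj : forall a b, P a -> P b -> f a = f b -> a = b.

Lemma multiplicity_map_inj_on l z : (forall a, In a l -> P a) -> P z ->
  multiplicity (map f l) (f z) = multiplicity l z.
Proof.
  intros Hl Hz. induction l as [|x l IH]; auto.
  simpl in Hl. rewrite map_cons, !multiplicity_cons, IH by auto.
  do 2 destruct excluded_middle_informative; subst; auto.
  - exfalso. auto.
  - congruence.
Qed.

Lemma Permutation_map_inj_on l1 l2 :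
  (forall a, In a l1 -> P a) -> (forall a, In a l2 -> P a) ->
  Permutation (map f l1) (map f l2) -> Permutation l1 l2.
Proof.
  rewrite !Permutation_multiplicity. intros H1 H2 E z.
  destruct (classic (P z)) as [Hz|Hz].
  - rewrite <- !(multiplicity_map_inj_on _ z); auto.
  - rewrite !multiplicity_not_In; auto.
Qed.

End MultisetsMap.

Section Words.
Variable Q : quiver.

Lemma is_path_app a l1 l2 b :
  is_path Q a (l1 ++ l2) b <-> exists c, is_path Q a l1 c /\ is_path Q c l2 b.
Proof.
  revert a; induction l1 as [|x l1 IH]; intros a; simpl.
  - split; [intros H; exists a; auto | intros [c [-> H]]; auto].
  - rewrite IH. split.
    + intros [Hs [c [H1 H2]]]. exists c; auto.
    + intros [c [[Hs H1] H2]]. split; eauto.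
Qed.

Lemma valid_idw a : valid Q (idw Q a).
Proof. reflexivity. Qed.

Lemma valid_cat f g :
  valid Q f -> valid Q g -> wtgt Q f = wsrc Q g -> valid Q (cat Q f g).
Proof.
  unfold valid, cat; simpl; intros Hf Hg E. apply is_path_app.
  exists (wtgt Q f); rewrite E at 2; auto.
Qed.

Lemma cat_assoc f g h : cat Q (cat Q f g) h = cat Q f (cat Q g h).
Proof. unfold cat; simpl; rewrite app_assoc; auto. Qed.

Lemma cat_cons a x l b : W Q a (x :: l) b = cat Q (W Q a [x] (qtgt x)) (W Q (qtgt x) l b).
Proof. reflexivity. Qed.

Variables (la ra : qarr Q -> qarr Q -> qarr Q).

Lemma rel_step_ends w w' : rel_step Q la ra w w' ->
  wsrc Q w = wsrc Q w' /\ wtgt Q w = wtgt Q w' /\ length (warr Q w) = length (warr Q w').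
Proof. intros []; simpl; rewrite !length_app; simpl; auto. Qed.

Lemma eqC_ends w w' : eqC Q la ra w w' ->
  wsrc Q w = wsrc Q w' /\ wtgt Q w = wtgt Q w' /\ length (warr Q w) = length (warr Q w').
Proof.
  induction 1 as [w w' H| | |]; [apply rel_step_ends; auto | auto | intuition congruence
  | intuition congruence].
Qed.

Lemma eqC_wsrc w w' : eqC Q la ra w w' -> wsrc Q w = wsrc Q w'.
Proof. apply eqC_ends. Qed.

Lemma eqC_wtgt w w' : eqC Q la ra w w' -> wtgt Q w = wtgt Q w'.
Proof. apply eqC_ends. Qed.

Lemma eqC_length w w' : eqC Q la ra w w' -> length (warr Q w) = length (warr Q w').
Proof. apply eqC_ends. Qed.

Lemma eqC_valid w w' : st_preserving Q la ra -> eqC Q la ra w w' ->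
  (valid Q w <-> valid Q w').
Proof.
  intros Hst. induction 1 as [w w' [a b p q x y Hxy]| | |]; try tauto.
  unfold valid; simpl. rewrite !is_path_app; simpl.
  destruct (Hst x y Hxy) as [H1 [H2 H3]]. unfold composable in *.
  split; intros [c [Hp [Hx [Hy Hq]]]]; exists c; repeat split; auto; congruence.
Qed.

End Words.

#[global] Instance eqC_Equivalence Q la ra : Equivalence (eqC Q la ra).
Proof.
  split; red; [apply rst_refl | apply rst_sym | apply rst_trans].
Qed.

#[global] Instance cat_Proper Q la ra :
  Proper (eqC Q la ra ==> eqC Q la ra ==> eqC Q la ra) (cat Q).
Proof.
  intros f f' Hf g g' Hg. transitivity (cat Q f' g).
  - induction Hf as [w w' []| | |]; try (econstructor; eauto; fail).
    apply rst_step. unfold cat; simpl. rewrite <- !app_assoc. constructor; auto.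
  - induction Hg as [w w' []| | |]; try (econstructor; eauto; fail).
    apply rst_step. unfold cat; simpl. rewrite !app_assoc. constructor; auto.
Qed.

Section Divisibility.
Variables (Q : quiver) (la ra : qarr Q -> qarr Q -> qarr Q).

Lemma left_div_wsrc f h : left_div Q la ra f h -> wsrc Q f = wsrc Q h.
Proof. intros [g [_ [_ E]]]. apply eqC_wsrc in E. auto. Qed.

Lemma left_div_eqC f g g' : eqC Q la ra g g' -> left_div Q la ra f g -> left_div Q la ra f g'.
Proof. intros E [h [Hh [Eh D]]]. exists h. rewrite <- E. auto. Qed.

Lemma left_div_trans f g h :
  left_div Q la ra f g -> left_div Q la ra g h -> left_div Q la ra f h.
Proof.
  intros [k [Hk [Ek Dk]]] [k' [Hk' [Ek' Dk']]].
  pose proof (eqC_wtgt Q la ra _ _ Dk) as Tk. simpl in Tk.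
  exists (cat Q k k'). split; [apply valid_cat; auto; congruence|]. split; [auto|].
  rewrite <- cat_assoc, Dk. auto.
Qed.

Lemma left_div_cat_l h f g : left_div Q la ra f g -> left_div Q la ra (cat Q h f) (cat Q h g).
Proof.
  intros [k [Hk [Ek Dk]]]. exists k. repeat split; auto. rewrite cat_assoc, Dk. reflexivity.
Qed.

End Divisibility.

(** * Groupoids of bijections *)

Section BijectionGroupoid.
Variables (O X : Type) (fibre : O -> X -> Prop).

(* Given by its graph rather than as a function, so that bijections agreeing on the
   fibres are equal. *)
Record fibre_bij := FibreBij {
  bdom : O;
  bcod : O;
  brel : X -> X -> Prop;
  brel_fibre : forall m m', brel m m' -> fibre bdom m /\ fibre bcod m';
  brel_fun : forall m m1 m2, brel m m1 -> brel m m2 -> m1 = m2;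
  brel_inj : forall m1 m2 m', brel m1 m' -> brel m2 m' -> m1 = m2;
  brel_total : forall m, fibre bdom m -> exists m', brel m m';
  brel_onto : forall m', fibre bcod m' -> exists m, brel m m'
}.

Lemma fibre_bij_ext f g : bdom f = bdom g -> bcod f = bcod g ->
  (forall m m', brel f m m' <-> brel g m m') -> f = g.
Proof.
  destruct f as [d1 c1 R1 ? ? ? ? ?], g as [d2 c2 R2 ? ? ? ? ?]; simpl.
  intros -> -> H.
  assert (R1 = R2) as <-.
  { do 2 (apply functional_extensionality; intro). apply propositional_extensionality; auto. }
  f_equal; apply proof_irrelevance.
Qed.

Definition bij_id (a : O) : fibre_bij.
Proof.
  refine (FibreBij a a (fun m m' => fibre a m /\ m' = m) _ _ _ _ _).
  - intros m m' [H ->]; auto.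
  - intros m m1 m2 [_ ->] [_ ->]; auto.
  - intros m1 m2 m' [_ ->] [_ ->]; auto.
  - intros m H; exists m; auto.
  - intros m H; exists m; auto.
Defined.

Definition bij_inv (f : fibre_bij) : fibre_bij.
Proof.
  refine (FibreBij (bcod f) (bdom f) (fun m m' => brel f m' m) _ _ _ _ _).
  - intros m m' H. destruct (brel_fibre f _ _ H); auto.
  - intros m m1 m2 H1 H2. eapply brel_inj; eauto.
  - intros m1 m2 m' H1 H2. eapply brel_fun; eauto.
  - apply (brel_onto f).
  - apply (brel_total f).
Defined.

Definition bij_comp_of (f g : fibre_bij) (e : bcod f = bdom g) : fibre_bij.
Proof.
  refine (FibreBij (bdom f) (bcod g) (fun m m'' => exists m', brel f m m' /\ brel g m' m'')
            _ _ _ _ _).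
  - intros m m'' [m' [H1 H2]].
    split; [apply (brel_fibre f _ _ H1) | apply (brel_fibre g _ _ H2)].
  - intros m m1 m2 [a [A1 A2]] [b [B1 B2]].
    pose proof (brel_fun f _ _ _ A1 B1); subst b. eapply brel_fun; eauto.
  - intros m1 m2 m' [a [A1 A2]] [b [B1 B2]].
    pose proof (brel_inj g _ _ _ A2 B2); subst b. eapply brel_inj; eauto.
  - intros m H. destruct (brel_total f m H) as [m' H1].
    destruct (brel_total g m') as [m'' H2].
    + rewrite <- e. apply (brel_fibre f _ _ H1).
    + exists m''; eauto.
  - intros m'' H. destruct (brel_onto g m'' H) as [m' H2].
    destruct (brel_onto f m') as [m H1].
    + rewrite e. apply (brel_fibre g _ _ H2).
    + exists m; eauto.
Defined.

(* Composition must be total; on non-composable pairs it returns [f]. *)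
Definition bij_comp (f g : fibre_bij) : fibre_bij :=
  match excluded_middle_informative (bcod f = bdom g) with
  | left e => bij_comp_of f g e
  | right _ => f
  end.

Lemma bij_comp_spec f g : bcod f = bdom g ->
  bdom (bij_comp f g) = bdom f /\ bcod (bij_comp f g) = bcod g /\
  forall m m'', brel (bij_comp f g) m m'' <-> exists m', brel f m m' /\ brel g m' m''.
Proof.
  intros e. unfold bij_comp. destruct excluded_middle_informative; [|contradiction].
  simpl; tauto.
Qed.

Definition bij_groupoid : groupoid.
Proof.
  refine (Groupoid O fibre_bij bdom bcod bij_id bij_comp bij_inv
            _ _ _ _ _ _ _ _ _ _ _).
  - reflexivity.
  - reflexivity.
  - intros f g e. apply (bij_comp_spec f g e).
  - intros f g e. apply (bij_comp_spec f g e).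
  - intros f. destruct (bij_comp_spec (bij_id (bdom f)) f eq_refl) as [A [B C]].
    apply fibre_bij_ext; auto. intros m m''. rewrite C. simpl. split.
    + intros [m' [[_ ->] H]]; auto.
    + intros H. exists m. split; auto. split; auto. apply (brel_fibre f _ _ H).
  - intros f. destruct (bij_comp_spec f (bij_id (bcod f)) eq_refl) as [A [B C]].
    apply fibre_bij_ext; auto. intros m m''. rewrite C. simpl. split.
    + intros [m' [H [_ ->]]]; auto.
    + intros H. exists m''. split; auto. split; auto. apply (brel_fibre f _ _ H).
  - intros f g h e1 e2.
    destruct (bij_comp_spec f g e1) as [A1 [B1 C1]].
    destruct (bij_comp_spec g h e2) as [A2 [B2 C2]].
    destruct (bij_comp_spec (bij_comp f g) h ltac:(congruence)) as [A3 [B3 C3]].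
    destruct (bij_comp_spec f (bij_comp g h) ltac:(congruence)) as [A4 [B4 C4]].
    apply fibre_bij_ext; [congruence|congruence|]. intros m m'''.
    rewrite C3, C4. setoid_rewrite C1. setoid_rewrite C2. firstorder.
  - reflexivity.
  - reflexivity.
  - intros f. destruct (bij_comp_spec f (bij_inv f) eq_refl) as [A [B C]].
    apply fibre_bij_ext; auto. intros m m''. rewrite C. simpl. split.
    + intros [m' [H1 H2]]. pose proof (brel_inj f _ _ _ H1 H2); subst.
      split; auto. apply (brel_fibre f _ _ H1).
    + intros [H ->]. destruct (brel_total f m H) as [m' H1]. exists m'; auto.
  - intros f. destruct (bij_comp_spec (bij_inv f) f eq_refl) as [A [B C]].
    apply fibre_bij_ext; auto. intros m m''. rewrite C. simpl. split.
    + intros [m' [H1 H2]]. pose proof (brel_fun f _ _ _ H1 H2); subst.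
      split; auto. apply (brel_fibre f _ _ H1).
    + intros [H ->]. destruct (brel_onto f m H) as [m' H1]. exists m'; auto.
Defined.

End BijectionGroupoid.

(** * The atoms of an element of C(σ) *)

Section StructureCategory.
Variables (Q : quiver) (la ra : qarr Q -> qarr Q -> qarr Q).
Hypothesis HY : involutive_nondegenerate_YB_map Q la ra.

Lemma YB_st_preserving : st_preserving Q la ra.
Proof. apply HY. Qed.

Lemma lact_src x y : qsrc y = qtgt x -> qsrc (la x y) = qsrc x.
Proof. intros H. apply YB_st_preserving. red; auto. Qed.

Lemma lact_inj x y1 y2 : qsrc y1 = qtgt x -> qsrc y2 = qtgt x -> la x y1 = la x y2 -> y1 = y2.
Proof. apply HY. Qed.

Lemma lact_surj x z : qsrc z = qsrc x -> exists y, qsrc y = qtgt x /\ la x y = z.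
Proof. apply HY. Qed.

(* As a multiset, [atoms [x1; x2; x3; ...] = [x1; x1 ⇀ x2; x1 ⇀ (x2 ⇀ x3); ...]] is the
   multiset of atoms left-dividing the element (the I-structure of C(σ)). *)
Fixpoint atoms (l : list (qarr Q)) : list (qarr Q) :=
  match l with [] => [] | x :: u => x :: map (la x) (atoms u) end.

Definition lact_path (l : list (qarr Q)) (z : qarr Q) : qarr Q := fold_right la z l.

Lemma atoms_app p r : atoms (p ++ r) = atoms p ++ map (lact_path p) (atoms r).
Proof.
  induction p as [|x p IH]; simpl.
  - rewrite map_id; auto.
  - rewrite IH, map_app, map_map; auto.
Qed.

Lemma length_atoms l : length (atoms l) = length l.
Proof. induction l; simpl; rewrite ?length_map; auto. Qed.

Lemma atoms_src a l b z : is_path Q a l b -> In z (atoms l) -> qsrc z = a.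
Proof.
  revert a z; induction l as [|x u IH]; simpl; intros a z Hp Hz; [tauto|].
  destruct Hp as [Hs Hp]. destruct Hz as [<- | Hz]; auto.
  apply in_map_iff in Hz as [w [<- Hw]]. rewrite lact_src; eauto.
Qed.

Lemma lact_path_src a l b z : is_path Q a l b -> qsrc z = b -> qsrc (lact_path l z) = a.
Proof.
  revert a; induction l as [|x u IH]; simpl; intros a Hp Hz; [congruence|].
  destruct Hp as [Hs Hp]. rewrite lact_src; eauto.
Qed.

Lemma lact_path_inj a l b z1 z2 : is_path Q a l b -> qsrc z1 = b -> qsrc z2 = b ->
  lact_path l z1 = lact_path l z2 -> z1 = z2.
Proof.
  revert a; induction l as [|x u IH]; simpl; intros a Hp H1 H2 E; auto.
  destruct Hp as [Hs Hp]. apply (IH _ Hp H1 H2).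
  apply (lact_inj x); auto; eapply lact_path_src; eauto.
Qed.

Lemma lact_path_surj a l b y : is_path Q a l b -> qsrc y = a ->
  exists z, qsrc z = b /\ lact_path l z = y.
Proof.
  revert a y; induction l as [|x u IH]; simpl; intros a y Hp Hy.
  - exists y; split; congruence.
  - destruct Hp as [Hs Hp]. destruct (lact_surj x y) as [y' [Hy' <-]]; [congruence|].
    destruct (IH _ y' Hp Hy') as [z [Hz <-]]. exists z; auto.
Qed.

(* The atoms of [x y q] start with [x; x ⇀ y], those of [(x ⇀ y) (x ↼ y) q] with
   [x ⇀ y; x] by involutivity; the remaining ones agree by the braid relation. *)
Lemma atoms_rel_step w w' : rel_step Q la ra w w' -> valid Q w ->
  Permutation (atoms (warr Q w)) (atoms (warr Q w')).
Proof.
  intros [a b p q x y Hxy] Hv. unfold valid in Hv; simpl in *.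
  rewrite !atoms_app. apply Permutation_app_head, Permutation_map.
  apply is_path_app in Hv as [c [_ [Hx [Hy Hq]]]]. pose proof HY as [_ [Hbr [Hinv _]]].
  simpl. rewrite (proj1 (Hinv x y Hxy)), !map_map.
  erewrite map_ext_in; [apply perm_swap|].
  intros z Hz. specialize (Hbr x y z Hxy (eq_sym (atoms_src _ _ _ _ Hq Hz))).
  simpl in Hbr. injection Hbr; auto.
Qed.

Lemma atoms_eqC w w' : eqC Q la ra w w' -> valid Q w ->
  Permutation (atoms (warr Q w)) (atoms (warr Q w')).
Proof.
  pose proof YB_st_preserving as Hst.
  induction 1 as [w w' H| | w w' H IH | w1 w2 w3 H1 IH1 H2 IH2]; intros Hv.
  - apply atoms_rel_step; auto.
  - auto.
  - symmetry. apply IH. rewrite (eqC_valid Q la ra w w' Hst H); auto.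
  - rewrite IH1 by auto. apply IH2. rewrite <- (eqC_valid Q la ra w1 w2 Hst H1); auto.
Qed.

Lemma atom_to_front a l b y : is_path Q a l b -> In y (atoms l) ->
  exists v, eqC Q la ra (W Q a l b) (W Q a (y :: v) b).
Proof.
  revert a y; induction l as [|x u IH]; simpl; intros a y Hp Hy; [tauto|].
  destruct Hp as [Hs Hp]. destruct Hy as [<- | Hy].
  - exists u; reflexivity.
  - apply in_map_iff in Hy as [z [<- Hz]].
    destruct (IH _ _ Hp Hz) as [v Hv].
    exists (ra x z :: v). rewrite cat_cons, Hv.
    apply rst_step, (rel_step_intro Q la ra a b [] v x z).
    symmetry; eapply atoms_src; eauto.
Qed.

Lemma atoms_surj a (M : list (qarr Q)) : (forall z, In z M -> qsrc z = a) ->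
  exists l b, is_path Q a l b /\ Permutation (atoms l) M.
Proof.
  induction M as [|y M IH]; intros HM.
  - exists [], a; simpl; auto.
  - destruct IH as [l [b [Hp P]]]; [intros; apply HM; right; auto|].
    destruct (lact_path_surj _ _ _ y Hp (HM y (or_introl eq_refl))) as [z [Hz E]].
    exists (l ++ [z]), (qtgt z). split.
    + apply is_path_app. exists b; simpl; auto.
    + rewrite atoms_app. simpl. rewrite E, P. symmetry. apply Permutation_cons_append.
Qed.

Lemma submultiset_atoms_of_left_div f h : valid Q f -> left_div Q la ra f h ->
  submultiset (atoms (warr Q f)) (atoms (warr Q h)).
Proof.
  intros Hf [g [Hg [Ef E]]] z.
  apply atoms_eqC in E; [|apply valid_cat; auto].
  rewrite Permutation_multiplicity in E. rewrite <- E. simpl.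
  rewrite atoms_app, multiplicity_app. lia.
Qed.

Lemma submultiset_atoms_cons x u v c b : is_path Q (qtgt x) u c -> is_path Q (qtgt x) v b ->
  submultiset (atoms (x :: u)) (atoms (x :: v)) -> submultiset (atoms u) (atoms v).
Proof.
  intros Hu Hv Hsub z. destruct (excluded_middle_informative (qsrc z = qtgt x)) as [Hz|Hz].
  - specialize (Hsub (la x z)). cbn [atoms] in Hsub. rewrite !multiplicity_cons in Hsub.
    rewrite !(multiplicity_map_inj_on (la x) (fun y => qsrc y = qtgt x)) in Hsub;
      eauto using lact_inj, atoms_src.
    lia.
  - rewrite (multiplicity_not_In (atoms u)); [lia|].
    intros Hin. apply Hz, (atoms_src _ _ _ _ Hu Hin).
Qed.

Lemma left_div_of_submultiset_atoms a l c w : is_path Q a l c -> valid Q w -> wsrc Q w = a ->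
  submultiset (atoms l) (atoms (warr Q w)) -> left_div Q la ra (W Q a l c) w.
Proof.
  revert a w; induction l as [|x u IH]; intros a w Hp Hw Ew Hsub.
  - simpl in Hp; subst c. exists w; split; [|split]; auto.
    destruct w; simpl in *; subst; reflexivity.
  - destruct w as [a' l' b']; simpl in Ew; subst a'. destruct Hp as [Hs Hp].
    assert (Hx : In x (atoms l')).
    { apply In_multiplicity. specialize (Hsub x). cbn [atoms warr] in Hsub.
      rewrite multiplicity_cons in Hsub. destruct excluded_middle_informative; [lia | congruence]. }
    destruct (atom_to_front _ _ _ _ Hw Hx) as [v Hv].
    pose proof (atoms_eqC _ _ Hv Hw) as Pv. cbn [warr] in Pv.
    rewrite Permutation_multiplicity in Pv.
    assert (Hpv : is_path Q (qtgt x) v b').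
    { apply (eqC_valid Q la ra _ _ YB_st_preserving Hv) in Hw. apply Hw. }
    destruct (IH (qtgt x) (W Q (qtgt x) v b') Hp Hpv eq_refl) as [g [Hg [Eg E]]].
    + apply (submultiset_atoms_cons x u v c b'); auto. intros z. rewrite <- (Pv z). apply Hsub.
    + exists g. split; [|split]; auto. rewrite Hv, cat_cons, cat_assoc, E. reflexivity.
Qed.

Lemma left_div_iff_submultiset_atoms f h : valid Q f -> valid Q h -> wsrc Q f = wsrc Q h ->
  left_div Q la ra f h <-> submultiset (atoms (warr Q f)) (atoms (warr Q h)).
Proof.
  intros Hf Hh E. split; [apply submultiset_atoms_of_left_div; auto|].
  destruct f as [a l c]; simpl in *. apply left_div_of_submultiset_atoms; auto.
Qed.

Lemma eqC_of_Permutation_atoms w w' : valid Q w -> valid Q w' -> wsrc Q w = wsrc Q w' ->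
  Permutation (atoms (warr Q w)) (atoms (warr Q w')) -> eqC Q la ra w w'.
Proof.
  intros Hw Hw' Es P.
  destruct (proj2 (left_div_iff_submultiset_atoms w w' Hw Hw' Es)) as [g [Hg [Eg E]]].
  { rewrite Permutation_multiplicity in P. intros z. rewrite P; auto. }
  assert (Hlen : length (warr Q g) = 0).
  { apply eqC_length in E. apply Permutation_length in P.
    rewrite !length_atoms in P. simpl in E. rewrite length_app in E. lia. }
  destruct w as [a l b], g as [a' [|] b']; try discriminate.
  unfold valid in Hg; simpl in Eg, Hg; subst a' b'.
  rewrite <- E. unfold cat; simpl. rewrite app_nil_r. reflexivity.
Qed.

Lemma structure_left_cancellative : left_cancellative Q la ra.
Proof.
  intros f g g' Hf Hg Hg' E1 E2 E.
  apply atoms_eqC in E; [|apply valid_cat; auto]. simpl in E.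
  rewrite !atoms_app in E. apply Permutation_app_inv_l in E.
  apply eqC_of_Permutation_atoms; auto; [congruence|].
  apply (Permutation_map_inj_on _ (fun z => qsrc z = wtgt Q f)) in E; auto.
  - intros z1 z2 H1 H2. eapply lact_path_inj; eauto.
  - intros z Hz. rewrite E1. eapply atoms_src; eauto.
  - intros z Hz. rewrite E2. eapply atoms_src; eauto.
Qed.

Lemma right_lcm_exists f g : valid Q f -> valid Q g -> wsrc Q f = wsrc Q g ->
  exists h, valid Q h /\ left_div Q la ra f h /\ left_div Q la ra g h /\
    forall h', valid Q h' -> left_div Q la ra f h' -> left_div Q la ra g h' ->
      left_div Q la ra h h'.
Proof.
  intros Hf Hg E.
  destruct (multiplicity_max (atoms (warr Q f)) (atoms (warr Q g))) as [M HM].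
  destruct (atoms_surj (wsrc Q f) M) as [l [b [Hp P]]].
  { intros z Hz. apply In_multiplicity in Hz. rewrite HM in Hz.
    destruct (Nat.max_spec (multiplicity (atoms (warr Q f)) z)
                           (multiplicity (atoms (warr Q g)) z)) as [[_ Hm]|[_ Hm]];
      rewrite Hm, <- In_multiplicity in Hz; [rewrite E|]; eapply atoms_src; eauto. }
  rewrite Permutation_multiplicity in P.
  assert (Hh : valid Q (W Q (wsrc Q f) l b)) by exact Hp.
  exists (W Q (wsrc Q f) l b). split; [|split; [|split]]; auto.
  - apply left_div_iff_submultiset_atoms; auto. intros z; simpl; rewrite P, HM; lia.
  - apply left_div_iff_submultiset_atoms; auto. intros z; simpl; rewrite P, HM; lia.
  - intros h' Hh' Df Dg. pose proof (left_div_wsrc Q la ra _ _ Df) as Eh'.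
    apply left_div_iff_submultiset_atoms in Df, Dg; auto; try congruence.
    apply left_div_iff_submultiset_atoms; auto.
    intros z; simpl; rewrite P, HM. specialize (Df z); specialize (Dg z); lia.
Qed.

(** * An affine action of C(σ) *)

Definition supported (a : qobj Q) (m : qarr Q -> Z) : Prop :=
  forall z, qsrc z <> a -> m z = 0%Z.

(* Inverse of [la x] on the arrows with source [qsrc x]; junk elsewhere. *)
Definition lact_inv (x z : qarr Q) : qarr Q :=
  epsilon (inhabits x) (fun y => qsrc y = qtgt x /\ la x y = z).

Lemma lact_inv_spec x z : qsrc z = qsrc x ->
  qsrc (lact_inv x z) = qtgt x /\ la x (lact_inv x z) = z.
Proof.
  intros Hz. unfold lact_inv. apply epsilon_spec.
  destruct (lact_surj x z Hz) as [y Hy]. exists y; auto.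
Qed.

Lemma lact_inv_iff x y z : qsrc y = qtgt x -> qsrc z = qsrc x ->
  lact_inv x z = y <-> z = la x y.
Proof.
  intros Hy Hz. destruct (lact_inv_spec x z Hz) as [A B]. split; intros E.
  - rewrite <- E; auto.
  - apply (lact_inj x); congruence.
Qed.

Lemma lact_inv_braid x y z : composable x y -> qsrc z = qsrc x ->
  lact_inv (ra x y) (lact_inv (la x y) z) = lact_inv y (lact_inv x z).
Proof.
  intros Hxy Hz. pose proof HY as [Hst [Hbr _]].
  destruct (Hst x y Hxy) as [Sa [Sab Sb]]. unfold composable in *.
  destruct (lact_inv_spec x z Hz) as [A1 A2].
  destruct (lact_inv_spec y (lact_inv x z) ltac:(congruence)) as [B1 B2].
  set (w := lact_inv y (lact_inv x z)) in *.
  destruct (Hst (ra x y) w ltac:(red; congruence)) as [Sbw _].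
  assert (E : lact_inv (la x y) z = la (ra x y) w).
  { apply lact_inv_iff; try congruence.
    specialize (Hbr x y w Hxy ltac:(congruence)). simpl in Hbr.
    injection Hbr as Hb _ _. rewrite Hb, B2, A2. reflexivity. }
  rewrite E. apply lact_inv_iff; congruence.
Qed.

Definition indicator (P : Prop) : Z := if excluded_middle_informative P then 1%Z else 0%Z.

Lemma indicator_iff (P P' : Prop) : (P <-> P') -> indicator P = indicator P'.
Proof.
  intros H. unfold indicator.
  destruct (excluded_middle_informative P), (excluded_middle_informative P'); tauto.
Qed.

(* How multiplicities of atoms transform under [atoms (x :: u) = x :: map (la x) (atoms u)];
   unlike [atoms], this is invertible, so it defines a functor into a groupoid. *)
Definition arrow_action (x : qarr Q) (m : qarr Q -> Z) : qarr Q -> Z :=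
  fun z => if excluded_middle_informative (qsrc z = qsrc x)
           then (indicator (z = x) + m (lact_inv x z))%Z else 0%Z.

Definition path_action (l : list (qarr Q)) (m : qarr Q -> Z) : qarr Q -> Z :=
  fold_right arrow_action m l.

Lemma path_action_supported a l b m : is_path Q a l b -> supported b m ->
  supported a (path_action l m).
Proof.
  destruct l as [|x u]; simpl; intros Hp Hm.
  - subst; auto.
  - destruct Hp as [<- _]. intros z Hz. unfold arrow_action.
    destruct excluded_middle_informative; tauto.
Qed.

Lemma arrow_action_inj x m1 m2 : supported (qtgt x) m1 -> supported (qtgt x) m2 ->
  arrow_action x m1 = arrow_action x m2 -> m1 = m2.
Proof.
  intros H1 H2 E. apply functional_extensionality. intros y.
  destruct (excluded_middle_informative (qsrc y = qtgt x)) as [e|n].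
  2:{ rewrite H1, H2; auto. }
  assert (Hs : qsrc (la x y) = qsrc x) by (apply lact_src; auto).
  apply (f_equal (fun f => f (la x y))) in E. unfold arrow_action in E.
  destruct excluded_middle_informative; [|contradiction].
  rewrite (proj2 (lact_inv_iff x y _ e Hs) eq_refl) in E. lia.
Qed.

Lemma arrow_action_surj x m' : supported (qsrc x) m' ->
  exists m, supported (qtgt x) m /\ arrow_action x m = m'.
Proof.
  intros H.
  exists (fun y => if excluded_middle_informative (qsrc y = qtgt x)
           then (m' (la x y) - indicator (la x y = x))%Z else 0%Z).
  split.
  - intros y Hy. destruct excluded_middle_informative; tauto.
  - apply functional_extensionality. intros z. unfold arrow_action.
    destruct (excluded_middle_informative (qsrc z = qsrc x)) as [e|n].
    + destruct (lact_inv_spec x z e) as [A B].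
      destruct excluded_middle_informative; [|contradiction]. rewrite B. lia.
    + rewrite H; auto.
Qed.

Lemma path_action_inj a l b m1 m2 : is_path Q a l b -> supported b m1 -> supported b m2 ->
  path_action l m1 = path_action l m2 -> m1 = m2.
Proof.
  revert a; induction l as [|x u IH]; simpl; intros a Hp H1 H2 E; auto.
  destruct Hp as [_ Hp]. apply (IH _ Hp H1 H2).
  apply (arrow_action_inj x); auto; eapply path_action_supported; eauto.
Qed.

Lemma path_action_surj a l b m' : is_path Q a l b -> supported a m' ->
  exists m, supported b m /\ path_action l m = m'.
Proof.
  revert a m'; induction l as [|x u IH]; simpl; intros a m' Hp H.
  - subst. exists m'; auto.
  - destruct Hp as [<- Hp]. destruct (arrow_action_surj x m' H) as [m1 [Y1 <-]].
    destruct (IH _ m1 Hp Y1) as [m [Y <-]]. exists m; auto.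
Qed.

Lemma arrow_action_braid x y m : composable x y -> supported (qtgt y) m ->
  arrow_action x (arrow_action y m) = arrow_action (la x y) (arrow_action (ra x y) m).
Proof.
  intros Hxy Hm. pose proof HY as [Hst [_ [Hinv _]]].
  destruct (Hst x y Hxy) as [Sa [Sab Sb]]. destruct (Hinv x y Hxy) as [I1 _].
  unfold composable in *. apply functional_extensionality. intros z. unfold arrow_action.
  destruct (excluded_middle_informative (qsrc z = qsrc x)) as [e|n];
  destruct (excluded_middle_informative (qsrc z = qsrc (la x y))) as [e'|n']; try congruence.
  destruct (lact_inv_spec x z e) as [A1 _]. destruct (lact_inv_spec _ z e') as [B1 _].
  do 2 (destruct excluded_middle_informative; [|congruence]).
  rewrite lact_inv_braid by auto.
  (* Both sides count [z = x] and [z = x ⇀ y]; on the right, [x] is (x ⇀ y) ⇀ (x ↼ y). *)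
  rewrite (indicator_iff (lact_inv x z = y) (z = la x y)) by (apply lact_inv_iff; congruence).
  rewrite (indicator_iff (lact_inv (la x y) z = ra x y) (z = x))
    by (rewrite lact_inv_iff, I1 by congruence; tauto).
  lia.
Qed.

Lemma path_action_eqC w w' m : eqC Q la ra w w' -> valid Q w -> supported (wtgt Q w) m ->
  path_action (warr Q w) m = path_action (warr Q w') m.
Proof.
  intros E. revert m. induction E as [w w' [a b p q x y Hxy]| | w w' H IH | w1 w2 w3 H1 IH1 H2 IH2];
    intros m Hv Hm.
  - unfold path_action in *; simpl in *. rewrite !fold_right_app. f_equal.
    apply is_path_app in Hv as [c [_ [_ [_ Hq]]]].
    apply arrow_action_braid; auto. eapply path_action_supported; eauto.
  - auto.
  - symmetry. apply IH.
    + apply (eqC_valid Q la ra w w' YB_st_preserving H); auto.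
    + rewrite (eqC_wtgt Q la ra w w' H); auto.
  - rewrite (IH1 m Hv Hm). apply IH2.
    + apply (eqC_valid Q la ra w1 w2 YB_st_preserving H1); auto.
    + rewrite <- (eqC_wtgt Q la ra w1 w2 H1); auto.
Qed.

Lemma path_action_zero a l b : is_path Q a l b ->
  path_action l (fun _ => 0%Z) = fun z => Z.of_nat (multiplicity (atoms l) z).
Proof.
  revert a; induction l as [|x u IH]; intros a Hp; [reflexivity|].
  destruct Hp as [Hs Hp].
  change (arrow_action x (path_action u (fun _ => 0%Z)) =
          fun z => Z.of_nat (multiplicity (x :: map (la x) (atoms u)) z)).
  rewrite (IH _ Hp). apply functional_extensionality; intros z. unfold arrow_action.
  rewrite multiplicity_cons. unfold indicator.
  destruct (excluded_middle_informative (qsrc z = qsrc x)) as [e|n].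
  - destruct (lact_inv_spec x z e) as [A B].
    rewrite <- (multiplicity_map_inj_on (la x) (fun y => qsrc y = qtgt x)), B;
      eauto using lact_inj, atoms_src.
    do 2 destruct excluded_middle_informative; subst; try congruence; lia.
  - destruct excluded_middle_informative; [congruence|].
    rewrite multiplicity_not_In; auto. intros Hz. apply in_map_iff in Hz as [y [<- Hy]].
    apply n, lact_src. eapply atoms_src; eauto.
Qed.

Let action_groupoid := bij_groupoid (qobj Q) (qarr Q -> Z) supported.

Definition action_bij (w : word Q) (Hw : valid Q w) : fibre_bij (qobj Q) (qarr Q -> Z) supported.
Proof.
  refine (FibreBij _ _ supported (wsrc Q w) (wtgt Q w)
            (fun m m' => supported (wtgt Q w) m' /\ m = path_action (warr Q w) m') _ _ _ _ _).
  - intros m m' [H ->]. split; auto. eapply path_action_supported; eauto.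
  - intros m m1 m2 [H1 E1] [H2 E2]. eapply path_action_inj; eauto. congruence.
  - intros m1 m2 m' [_ ->] [_ ->]; auto.
  - intros m H. destruct (path_action_surj _ _ _ m Hw H) as [m' [Y E]]. exists m'; auto.
  - intros m' H. eexists; split; eauto.
Defined.

Definition action_functor : cfun Q action_groupoid :=
  CFun Q action_groupoid (fun a => a)
    (fun w => match excluded_middle_informative (valid Q w) with
              | left Hw => action_bij w Hw
              | right _ => bij_id _ _ supported (wsrc Q w) end).

Lemma action_functor_spec w : valid Q w ->
  bdom _ _ _ (cf1 action_functor w) = wsrc Q w /\ bcod _ _ _ (cf1 action_functor w) = wtgt Q w /\
  forall m m', brel _ _ _ (cf1 action_functor w) m m' <->
    supported (wtgt Q w) m' /\ m = path_action (warr Q w) m'.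
Proof.
  intros Hw. simpl. destruct excluded_middle_informative; [|contradiction]. simpl; tauto.
Qed.

Lemma action_functor_is_cfunctor : is_cfunctor Q la ra action_functor.
Proof.
  split; [|split; [|split; [|split]]].
  - intros w Hw. apply (action_functor_spec w Hw).
  - intros w Hw. apply (action_functor_spec w Hw).
  - intros w w' Hw Hw' E.
    destruct (action_functor_spec w Hw) as [A1 [B1 C1]].
    destruct (action_functor_spec w' Hw') as [A2 [B2 C2]].
    rewrite (eqC_wsrc Q la ra w w' E), (eqC_wtgt Q la ra w w' E) in *.
    apply fibre_bij_ext; [congruence|congruence|]. intros m m'. rewrite C1, C2.
    split; intros [H ->]; split; auto; [|symmetry];
      apply path_action_eqC; auto; rewrite (eqC_wtgt Q la ra w w' E); auto.
  - intros a. destruct (action_functor_spec _ (valid_idw Q a)) as [A [B C]].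
    apply fibre_bij_ext; auto. intros m m'. rewrite C. simpl. split; intros [H ->]; auto.
  - intros f g Hf Hg E.
    destruct (action_functor_spec _ (valid_cat Q f g Hf Hg E)) as [A [B C]].
    destruct (action_functor_spec _ Hf) as [A1 [B1 C1]].
    destruct (action_functor_spec _ Hg) as [A2 [B2 C2]].
    destruct (bij_comp_spec _ _ supported (cf1 action_functor f) (cf1 action_functor g))
      as [A3 [B3 C3]]; [congruence|].
    apply fibre_bij_ext; [simpl in *; congruence|simpl in *; congruence|].
    intros m m''. change (gcomp _ ?a ?b) with (bij_comp (qobj Q) (qarr Q -> Z) supported a b).
    rewrite C, C3. setoid_rewrite C1. setoid_rewrite C2.
    unfold path_action; cbn [warr cat wtgt]. rewrite fold_right_app. split.
    + intros [H ->]. exists (path_action (warr Q g) m''). repeat split; auto.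
      rewrite E. eapply path_action_supported; eauto.
    + intros [m' [[_ ->] [H ->]]]. auto.
Qed.

Lemma action_functor_faithful f g : valid Q f -> valid Q g ->
  cf1 action_functor f = cf1 action_functor g -> eqC Q la ra f g.
Proof.
  intros Hf Hg E.
  destruct (action_functor_spec f Hf) as [A1 [B1 C1]].
  destruct (action_functor_spec g Hg) as [A2 [B2 C2]].
  assert (H0 : supported (wtgt Q g) (fun _ => 0%Z)) by (intros ? ?; reflexivity).
  destruct (proj1 (C1 (path_action (warr Q g) (fun _ => 0%Z)) (fun _ => 0%Z))) as [_ Hfg].
  { rewrite E, C2. auto. }
  apply eqC_of_Permutation_atoms; auto; [congruence|].
  rewrite (path_action_zero _ _ _ Hf), (path_action_zero _ _ _ Hg) in Hfg.
  apply Permutation_multiplicity. intros z.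
  apply (f_equal (fun h => h z)) in Hfg. lia.
Qed.

Lemma enveloping_injective G iota : is_enveloping Q la ra G iota -> injective_cfun Q la ra iota.
Proof.
  intros [_ Huniv] f g Hf Hg E.
  destruct (Huniv _ _ action_functor_is_cfunctor) as [[P [_ [_ HP]]] _].
  apply action_functor_faithful; auto.
  rewrite <- (HP f Hf), <- (HP g Hg), E. reflexivity.
Qed.

End StructureCategory.

(** * The opposite solution *)

Definition quiver_op (Q : quiver) : quiver := Quiver (qobj Q) (qarr Q) (@qtgt Q) (@qsrc Q).

Definition word_op {Q : quiver} (w : word Q) : word (quiver_op Q) :=
  W (quiver_op Q) (wtgt Q w) (rev (warr Q w)) (wsrc Q w).

Definition word_unop {Q : quiver} (w : word (quiver_op Q)) : word Q :=
  W Q (wtgt _ w) (rev (warr _ w)) (wsrc _ w).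

Lemma is_path_rev (Q : quiver) a l b : is_path Q a l b -> is_path (quiver_op Q) b (rev l) a.
Proof.
  revert a; induction l as [|x l IH]; intros a H; [simpl in *; auto|].
  destruct H as [Hs H]. apply is_path_app. exists (qtgt x). simpl; auto.
Qed.

(* [quiver_op (quiver_op Q)] is not [Q], but it has the same arrows, sources and targets. *)
Lemma is_path_unrev (Q : quiver) a l b : is_path (quiver_op Q) b l a -> is_path Q a (rev l) b.
Proof. exact (is_path_rev (quiver_op Q) b l a). Qed.

Section Opposite.
Variables (Q : quiver) (la ra : qarr Q -> qarr Q -> qarr Q).
Local Notation la_op := (fun x y : qarr (quiver_op Q) => ra y x).
Local Notation ra_op := (fun x y : qarr (quiver_op Q) => la y x).

Lemma YB_op : involutive_nondegenerate_YB_map Q la ra ->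
  involutive_nondegenerate_YB_map (quiver_op Q) la_op ra_op.
Proof.
  intros [Hst [Hbr [Hinv [HN1 HN2]]]]. unfold composable in *; simpl in *.
  split; [|split; [|split; [|split]]].
  - intros x y Hxy. destruct (Hst y x (eq_sym Hxy)) as [H1 [H2 H3]].
    unfold composable in *; simpl; auto.
  - intros x y z Hxy Hyz. simpl.
    specialize (Hbr z y x (eq_sym Hyz) (eq_sym Hxy)). simpl in Hbr.
    injection Hbr as B1 B2 B3. f_equal; [f_equal|]; congruence.
  - intros x y Hxy. destruct (Hinv y x (eq_sym Hxy)); auto.
  - exact HN2.
  - exact HN1.
Qed.

Lemma word_unop_op (w : word Q) : word_unop (word_op w) = w.
Proof. destruct w; unfold word_unop, word_op; simpl; rewrite rev_involutive; auto. Qed.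

Lemma word_op_unop (w : word (quiver_op Q)) : word_op (word_unop w) = w.
Proof. destruct w; unfold word_unop, word_op; simpl; rewrite rev_involutive; auto. Qed.

Lemma word_op_cat (f g : word Q) :
  word_op (cat Q f g) = cat (quiver_op Q) (word_op g) (word_op f).
Proof. unfold word_op, cat; simpl. rewrite rev_app_distr; auto. Qed.

Lemma word_unop_cat (f g : word (quiver_op Q)) :
  word_unop (cat (quiver_op Q) f g) = cat Q (word_unop g) (word_unop f).
Proof. unfold word_unop, cat; simpl. rewrite rev_app_distr; auto. Qed.

Lemma valid_word_op (w : word Q) : valid Q w -> valid (quiver_op Q) (word_op w).
Proof. apply is_path_rev. Qed.

Lemma valid_word_unop (w : word (quiver_op Q)) : valid (quiver_op Q) w -> valid Q (word_unop w).
Proof. apply is_path_unrev. Qed.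

Lemma eqC_word_op (w w' : word Q) :
  eqC Q la ra w w' -> eqC (quiver_op Q) la_op ra_op (word_op w) (word_op w').
Proof.
  induction 1 as [w w' [a b p q x y Hxy]| | |]; try (econstructor; eauto; fail).
  apply rst_step. unfold word_op; simpl. rewrite !rev_app_distr; cbn [rev]; rewrite <- !app_assoc.
  apply (rel_step_intro (quiver_op Q) la_op ra_op b a (rev q) (rev p) y x).
  red; simpl; auto.
Qed.

Lemma eqC_word_unop (w w' : word (quiver_op Q)) :
  eqC (quiver_op Q) la_op ra_op w w' -> eqC Q la ra (word_unop w) (word_unop w').
Proof.
  induction 1 as [w w' [a b p q x y Hxy]| | |]; try (econstructor; eauto; fail).
  apply rst_step. unfold word_unop; simpl. rewrite !rev_app_distr; cbn [rev]; rewrite <- !app_assoc.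
  apply (rel_step_intro Q la ra b a (rev q) (rev p) y x).
  red; simpl; auto.
Qed.

Lemma left_div_op_iff (f h : word Q) :
  left_div (quiver_op Q) la_op ra_op (word_op f) (word_op h) <-> left_mult Q la ra h f.
Proof.
  split.
  - intros [g [Hg [E1 E2]]]. exists (word_unop g).
    split; [apply valid_word_unop; auto|]. split; [simpl; auto|].
    apply eqC_word_unop in E2. rewrite word_unop_cat, !word_unop_op in E2. auto.
  - intros [u [Hu [E1 E2]]]. exists (word_op u).
    split; [apply valid_word_op; auto|]. split; [simpl; auto|].
    apply eqC_word_op in E2. rewrite word_op_cat in E2. auto.
Qed.

Hypothesis HY : involutive_nondegenerate_YB_map Q la ra.

Lemma structure_right_cancellative : right_cancellative Q la ra.
Proof.
  intros f g g' Hf Hg Hg' E1 E2 E.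
  apply eqC_word_op in E. rewrite !word_op_cat in E.
  apply structure_left_cancellative in E; try apply valid_word_op; auto; [|apply YB_op; auto].
  apply eqC_word_unop in E. rewrite !word_unop_op in E. auto.
Qed.

Lemma left_lcm_exists (f g : word Q) : valid Q f -> valid Q g -> wtgt Q f = wtgt Q g ->
  exists h, left_lcm Q la ra h f g.
Proof.
  intros Hf Hg E.
  destruct (right_lcm_exists _ _ _ (YB_op HY) (word_op f) (word_op g))
    as [h [Hh [D1 [D2 Dmin]]]]; try apply valid_word_op; auto.
  exists (word_unop h). rewrite <- (word_op_unop h) in D1, D2, Dmin.
  split; [apply valid_word_unop; auto|].
  split; [apply left_div_op_iff; auto|]. split; [apply left_div_op_iff; auto|].
  intros h' Hh' M1 M2. apply left_div_op_iff, Dmin; try apply left_div_op_iff; auto.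
  apply valid_word_op; auto.
Qed.

Lemma structure_left_Ore : left_Ore Q la ra.
Proof.
  split; [apply structure_left_cancellative; auto|].
  split; [apply structure_right_cancellative|].
  intros f g Hf Hg E.
  destruct (left_lcm_exists f g Hf Hg E) as [h [_ [[u [Hu [Eu Du]]] [[v [Hv [Ev Dv]]] _]]]].
  exists u, v. repeat split; auto. rewrite Du, Dv. reflexivity.
Qed.

End Opposite.

(** * Left-lcms and symmetric normal decompositions *)

Lemma gcomp_ginv_swap (G : groupoid) u v f g :
  gcod G u = gdom G f -> gcod G v = gdom G g -> gdom G u = gdom G v ->
  gcomp G u f = gcomp G v g -> gcomp G f (ginv G g) = gcomp G (ginv G u) v.
Proof.
  intros Hu Hv Huv E.
  assert (Ef : f = gcomp G (ginv G u) (gcomp G u f)).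
  { rewrite <- gassoc, ginv_l, Hu, gid_l; auto. rewrite ginv_cod; auto. }
  rewrite Ef, E.
  rewrite gassoc; [| rewrite ginv_cod, gcomp_dom; auto | rewrite gcomp_cod, ginv_dom; auto].
  rewrite gassoc, ginv_r, <- Hv, gid_r by (rewrite ?ginv_dom; auto). reflexivity.
Qed.

Section LeftLcms.
Variables (Q : quiver) (la ra : qarr Q -> qarr Q -> qarr Q).

Lemma eval_path_spec a ls b : C_path Q a ls b ->
  valid Q (eval_path Q a ls) /\ wsrc Q (eval_path Q a ls) = a /\ wtgt Q (eval_path Q a ls) = b.
Proof.
  revert a; induction ls as [|g ls IH]; simpl; intros a H.
  - subst. repeat split; apply valid_idw.
  - destruct H as [Hg [<- H]]. destruct (IH _ H) as [A [B C]].
    split; [apply valid_cat|]; auto.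
Qed.

Lemma first_entry_left_div a ls b : C_path Q a ls b ->
  left_div Q la ra (first_entry Q a ls) (eval_path Q a ls).
Proof.
  destruct ls as [|g ls]; simpl; intros H.
  - exists (idw Q a). split; [apply valid_idw|]. split; reflexivity.
  - destruct H as [_ [_ H]]. exists (eval_path Q (wtgt Q g) ls).
    destruct (eval_path_spec _ _ _ H) as [A [B _]]. repeat split; auto. reflexivity.
Qed.

Lemma left_disjoint_left_div u v u' v' : left_disjoint Q la ra u v ->
  left_div Q la ra u' u -> left_div Q la ra v' v -> left_disjoint Q la ra u' v'.
Proof.
  intros [Es LD] Du Dv.
  apply left_div_wsrc in Du as Su. apply left_div_wsrc in Dv as Sv.
  split; [congruence|]. intros h h' Hh Hh' Eh D1 D2.
  apply LD; auto; [congruence| |].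
  - eapply left_div_trans; [exact D1|]. apply left_div_cat_l; auto.
  - eapply left_div_trans; [exact D2|]. apply left_div_cat_l; auto.
Qed.

Hypotheses (Hlc : left_cancellative Q la ra) (Hrc : right_cancellative Q la ra).

(* If [k u = k' a] and [k v = k' b], then [a f = b g] is a common left-multiple of [f] and
   [g], hence [a f = w u f]; cancelling gives [a = w u] and then [k = k' w]. *)
Lemma left_disjoint_of_left_lcm f g h u v : valid Q f -> valid Q g -> valid Q u -> valid Q v ->
  wtgt Q u = wsrc Q f -> wtgt Q v = wsrc Q g ->
  eqC Q la ra (cat Q u f) h -> eqC Q la ra (cat Q v g) h -> left_lcm Q la ra h f g ->
  left_disjoint Q la ra u v.
Proof.
  intros Hf Hg Hu Hv Eu Ev Du Dv [Hh [_ [_ Hmin]]].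
  pose proof (eqC_wsrc Q la ra _ _ Du) as Su. pose proof (eqC_wsrc Q la ra _ _ Dv) as Sv.
  simpl in Su, Sv. split; [congruence|].
  intros k k' Hk Hk' Ek [a [Ha [Ea Da]]] [b [Hb [Eb Db]]].
  pose proof (eqC_wtgt Q la ra _ _ Da) as Ta. pose proof (eqC_wtgt Q la ra _ _ Db) as Tb.
  simpl in Ta, Tb.
  assert (Hab : eqC Q la ra (cat Q a f) (cat Q b g)).
  { apply (Hlc k'); try apply valid_cat; auto; try congruence.
    rewrite <- !cat_assoc, Da, Db, !cat_assoc, Du, Dv. reflexivity. }
  destruct (Hmin (cat Q a f)) as [w [Hw [Ew Dw]]].
  - apply valid_cat; auto. congruence.
  - exists a. repeat split; auto. congruence. reflexivity.
  - exists b. repeat split; auto. congruence. symmetry; auto.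
  - pose proof (eqC_wsrc Q la ra _ _ Dw) as Sw. simpl in Sw.
    assert (Hwu : eqC Q la ra (cat Q w u) a).
    { apply (Hrc f); auto; try congruence.
      - apply valid_cat; auto. congruence.
      - rewrite cat_assoc, Du. auto. }
    exists w. repeat split; auto; [congruence|].
    apply (Hrc u); try apply valid_cat; auto; simpl; try congruence.
    rewrite cat_assoc, Hwu. auto.
Qed.

Hypothesis Hlcm : forall f g, valid Q f -> valid Q g -> wtgt Q f = wtgt Q g ->
  exists h, left_lcm Q la ra h f g.

Lemma symmetric_normal_decomposition (G : groupoid) (iota : cfun Q G) (S : word Q -> Prop) :
  is_cfunctor Q la ra iota -> garside_family Q la ra S ->
  forall f g, valid Q f -> valid Q g -> wtgt Q f = wtgt Q g ->
  exists (x : qobj Q) (ts ss : list (word Q)),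
    C_path Q x ts (wsrc Q f) /\ C_path Q x ss (wsrc Q g) /\
    sym_S_normal Q la ra S x ts ss /\
    gcomp G (cf1 iota f) (ginv G (cf1 iota g))
    = gcomp G (ginv G (cf1 iota (eval_path Q x ts))) (cf1 iota (eval_path Q x ss)).
Proof.
  intros [Hd [Hc [Heq [_ Hcat]]]] HS f g Hf Hg E.
  destruct (Hlcm f g Hf Hg E) as [h Hl].
  pose proof Hl as [_ [[u [Hu [Eu Du]]] [[v [Hv [Ev Dv]]] _]]].
  pose proof (eqC_wsrc Q la ra _ _ Du) as Su. pose proof (eqC_wsrc Q la ra _ _ Dv) as Sv.
  simpl in Su, Sv.
  destruct (HS u Hu) as [ts [Cts [Nts Ets]]]. destruct (HS v Hv) as [ss [Css [Nss Ess]]].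
  rewrite Sv, <- Su in Css, Ess.
  destruct (eval_path_spec _ _ _ Cts) as [Vt _]. destruct (eval_path_spec _ _ _ Css) as [Vs _].
  pose proof (left_disjoint_of_left_lcm f g h u v Hf Hg Hu Hv Eu Ev Du Dv Hl) as LD.
  exists (wsrc Q u), ts, ss. rewrite <- Eu, <- Ev.
  split; [exact Cts|]. split; [exact Css|]. split.
  - split; [exact Nts|]. split; [exact Nss|]. apply (left_disjoint_left_div u v); auto.
    + eapply left_div_eqC; [exact Ets|]. eapply first_entry_left_div; eauto.
    + eapply left_div_eqC; [exact Ess|]. eapply first_entry_left_div; eauto.
  - rewrite (Heq _ _ Vt Hu Ets), (Heq _ _ Vs Hv Ess).
    apply gcomp_ginv_swap; rewrite ?Hc, ?Hd; auto; try congruence.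
    rewrite <- !Hcat; auto. apply Heq; try apply valid_cat; auto. rewrite Du, Dv. reflexivity.
Qed.

End LeftLcms.

Theorem proposition5p8 (Q : quiver) (lact ract : qarr Q -> qarr Q -> qarr Q) :
  involutive_nondegenerate_YB_map Q lact ract ->
  (* C(sigma) is left-Ore *)
  left_Ore Q lact ract /\
  (* any two elements with the same target admit a left-lcm *)
  (forall f g, valid Q f -> valid Q g -> wtgt Q f = wtgt Q g ->
     exists h, left_lcm Q lact ract h f g) /\
  (* for the enveloping groupoid (G, iota) of C(sigma) *)
  (forall (G : groupoid) (iota : cfun Q G), is_enveloping Q lact ract G iota ->
     (* iota is injective *)
     injective_cfun Q lact ract iota /\
     (* every f g^-1 in C C^-1 admits a symmetric S-normal decomposition
        t_q^-1 ... t_1^-1 s_1 ... s_p for the Garside family S of C *)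
     (forall S : word Q -> Prop,
        subfamily Q lact ract S -> garside_family Q lact ract S ->
        forall f g, valid Q f -> valid Q g -> wtgt Q f = wtgt Q g ->
        exists (x : qobj Q) (ts ss : list (word Q)),
          C_path Q x ts (wsrc Q f) /\ C_path Q x ss (wsrc Q g) /\
          sym_S_normal Q lact ract S x ts ss /\
          gcomp G (cf1 iota f) (ginv G (cf1 iota g))
          = gcomp G (ginv G (cf1 iota (eval_path Q x ts)))
                    (cf1 iota (eval_path Q x ss)))).
Proof.
  intros HY.
  pose proof (structure_left_Ore Q lact ract HY) as Hore.
  pose proof (left_lcm_exists Q lact ract HY) as Hlcm.
  pose proof Hore as [Hlc [Hrc _]].
  split; [exact Hore|]. split; [exact Hlcm|].
  intros G iota Henv. split; [apply enveloping_injective; auto|].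
  intros S _ HS. apply symmetric_normal_decomposition; auto. apply Henv.
Qed.
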